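(* Consider a radial three-phase distribution grid modeled by a tree on buses $\{0,1,\ldots,N\}$ with feeder bus $0$, where every bus $n\in\{1,\ldots,N\}$ has a unique parent bus $\pi_n<n$; line $n$ connects $\pi_n$ and $n$, and $\mathcal{C}_n$ denotes the set of children of bus $n$. For each line $n$ let $\mathbf{Z}_n=\mathbf{Z}_n^{\top}\in\mathbb{C}^{3\times 3}$ be its phase impedance matrix and define $\tilde{\mathbf{Z}}_n:=\operatorname{diag}(\boldsymbol{\alpha}^* )\mathbf{Z}_n\operatorname{diag}(\boldsymbol{\alpha})$, where $\boldsymbol{\alpha}:=[1~\alpha~\alpha^2]^{\top}$ and $\alpha=e^{-j2\pi/3}$. Let $\mathbf{s}_n=\mathbf{p}_n+j\mathbf{q}_n\in\mathbb{C}^3$ (with $\mathbf{p}_n,\mathbf{q}_n\in\mathbb{R}^3$), $\mathbf{v}_n\in\mathbb{R}^3$ and $\mathbf{S}_n\in\mathbb{C}^3$, $n=1,\ldots,N$, satisfy for all $n\in\{1,\ldots,N\}$ \[\mathbf{s}_n=\sum_{k\in\mathcal{C}_n}\mathbf{S}_k-\mathbf{S}_n,\qquad \mathbf{v}_{\pi_n}-\mathbf{v}_n=2\,\mathrm{Re}\big[\tilde{\mathbf{Z}}_n^*\mathbf{S}_n\big],\] where $\mathbf{v}_0:=v_0\mathbf{1}_3$ for a scalar $v_0$, $^*$ denotes entrywise complex conjugation and $\mathrm{Re}$ is taken entrywise. Stack $\mathbf{v}:=[\mathbf{v}_1^{\top}\cdots\mathbf{v}_N^{\top}]^{\top}$,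 $\mathbf{p}:=[\mathbf{p}_1^{\top}\cdots\mathbf{p}_N^{\top}]^{\top}$, $\mathbf{q}:=[\mathbf{q}_1^{\top}\cdots\mathbf{q}_N^{\top}]^{\top}\in\mathbb{R}^{3N}$. Then \[\mathbf{v}=\mathbf{R}\mathbf{p}+\mathbf{X}\mathbf{q}+v_0\mathbf{1}_{3N},\] where $\mathbf{R}:=2\mathbf{M}\,\mathrm{bdiag}(\{\mathrm{Re}[\tilde{\mathbf{Z}}_n]\})\mathbf{M}^{\top}$, $\mathbf{X}:=2\mathbf{M}\,\mathrm{bdiag}(\{\mathrm{Im}[\tilde{\mathbf{Z}}_n]\})\mathbf{M}^{\top}$ and $\mathbf{M}:=\mathbf{T}(\mathbf{I}_3\otimes\mathbf{F})\mathbf{T}^{\top}$.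
   Context: The reduced branch-bus incidence matrix $\mathbf{A}\in\mathbb{R}^{N\times N}$ is obtained from the full branch-bus incidence matrix $\tilde{\mathbf{A}}=[\mathbf{a}_0~\mathbf{A}]\in\mathbb{R}^{N\times(N+1)}$ (rows indexed by lines, columns by buses $0,\ldots,N$), whose row $n$ has entry $+1$ in column $\pi_n$, entry $-1$ in column $n$, and zeros elsewhere, by deleting the column $\mathbf{a}_0$ of bus $0$. The matrix $\mathbf{F}:=-\mathbf{A}^{-1}$. $\mathrm{bdiag}(\{\mathbf{Y}_n\})$ is the block diagonal matrix with blocks $\mathbf{Y}_1,\ldots,\mathbf{Y}_N$. The permutation matrix $\mathbf{T}\in\mathbb{R}^{3N\times 3N}$ is $\mathbf{T}:=[\mathbf{I}_3\otimes\mathbf{e}_1^{\top};\ \ldots;\ \mathbf{I}_3\otimes\mathbf{e}_N^{\top}]$ (blocks stacked vertically), where $\mathbf{e}_n$ is the $n$-th column of $\mathbf{I}_N$; it maps a vector stacked per phase (all buses of phase $a$, then $b$, then $c$) to the same vector stacked per bus. *)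

From HB Require Import structures.
From mathcomp Require Import all_boot all_order all_algebra.
From mathcomp Require Import complex mxtens.
Set Implicit Arguments. Unset Strict Implicit. Unset Printing Implicit Defensive.
Import Order.TTheory GRing.Theory Num.Theory.
Local Open Scope ring_scope.
Local Open Scope complex_scope.

(* Conventions: buses are 'I_N.+1 with ord0 the feeder bus 0; line/bus n in
   {1..N} of the paper is represented by n : 'I_N, i.e. bus (lift ord0 n)
   (value n+1).  par n : 'I_N.+1 is the parent bus pi_{n+1}.
   Stacked vectors in R^{3N} use index (bus, phase) |-> bus*3 + phase
   ("per bus"), i.e. type 'I_(N*3); per-phase stacking is phase*N + bus,
   type 'I_(3*N).  These are the Kronecker index conventions of mxtens. *)

Section Defs.
Variable R : rcfType.

(* alpha = e^{-j 2 pi / 3} = -1/2 - j sqrt(3)/2 *)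
Definition alpha : R[i] := (- (1 / 2)) +i* (- (Num.sqrt 3 / 2)).
Definition alphavec : 'cV[R[i]]_3 := \col_(k < 3) alpha ^+ k.
Definition cconj_mx m n (A : 'M[R[i]]_(m, n)) := map_mx (@conjc R) A.
Definition Re_mx m n (A : 'M[R[i]]_(m, n)) : 'M[R]_(m, n) := map_mx (@complex.Re R) A.
Definition Im_mx m n (A : 'M[R[i]]_(m, n)) : 'M[R]_(m, n) := map_mx (@complex.Im R) A.
Definition diagc (x : 'cV[R[i]]_3) : 'M[R[i]]_3 := diag_mx x^T.
Definition Ztilde (Z : 'M[R[i]]_3) : 'M[R[i]]_3 :=
  diagc (cconj_mx alphavec) *m Z *m diagc alphavec.

(* full branch-bus incidence matrix [a0 A], rows = lines, columns = buses 0..N *)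
Definition incid_full N (par : 'I_N -> 'I_N.+1) : 'M[R]_(N, N.+1) :=
  \matrix_(n, b) ((b == par n)%:R - (b == lift ord0 n)%:R).
Definition incid_red N (par : 'I_N -> 'I_N.+1) : 'M[R]_N :=
  col' ord0 (incid_full par).
Definition Fmx N (par : 'I_N -> 'I_N.+1) : 'M[R]_N := - invmx (incid_red par).

(* T = [I_3 (x) e_1^T; ...; I_3 (x) e_N^T]: row k of block n is row k of
   I_3 (x) e_n^T (whose row index in 'I_(3*1) is mxtens_index (k, 0)). *)
Definition Tblock N (n : 'I_N) : 'M[R]_(3 * 1, 3 * N) :=
  (1%:M : 'M[R]_3) *t (delta_mx 0 n : 'rV[R]_N).
Definition Tmx N : 'M[R]_(N * 3, 3 * N) :=
  \matrix_(r, c) Tblock (mxtens_unindex r).1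
                        (mxtens_index ((mxtens_unindex r).2, ord0)) c.

Definition Mmx N (par : 'I_N -> 'I_N.+1) : 'M[R]_(N * 3) :=
  Tmx N *m ((1%:M : 'M[R]_3) *t Fmx par) *m (Tmx N)^T.

Definition bdiag N (B : 'I_N -> 'M[R]_3) : 'M[R]_(N * 3) :=
  \sum_(n < N) ((delta_mx n n : 'M[R]_N) *t B n).

Definition Rmx N (par : 'I_N -> 'I_N.+1) (Z : 'I_N -> 'M[R[i]]_3) : 'M[R]_(N * 3) :=
  2%:R *: (Mmx par *m bdiag (fun n => Re_mx (Ztilde (Z n))) *m (Mmx par)^T).
Definition Xmx N (par : 'I_N -> 'I_N.+1) (Z : 'I_N -> 'M[R[i]]_3) : 'M[R]_(N * 3) :=
  2%:R *: (Mmx par *m bdiag (fun n => Im_mx (Ztilde (Z n))) *m (Mmx par)^T).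

Definition stack N (x : 'I_N -> 'cV[R]_3) : 'cV[R]_(N * 3) :=
  \col_(r < N * 3) x (mxtens_unindex r).1 (mxtens_unindex r).2 0.

Definition busv N (v0 : R) (v : 'I_N -> 'cV[R]_3) (b : 'I_N.+1) : 'cV[R]_3 :=
  match unlift ord0 b with Some m => v m | None => v0 *: const_mx 1 end.

Definition cplx_of m n (A : 'M[R]_(m, n)) : 'M[R[i]]_(m, n) := map_mx (fun x => x%:C) A.
Definition jC : R[i] := Complex 0 1.
End Defs.

From HB Require Import structures.
From mathcomp Require Import all_boot all_order all_algebra.
From mathcomp Require Import complex mxtens.
From mathcomp Require Import zify ring.
Set Implicit Arguments. Unset Strict Implicit. Unset Printing Implicit Defensive.
Import Order.TTheory GRing.Theory Num.Theory.
Local Open Scope ring_scope.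
Local Open Scope complex_scope.

(* In the per-bus stacking the permutation T turns I_3 (x) F into F (x) I_3,
   so M acts on a stacked vector by mixing the buses with F and leaving the
   phases alone.  The reduced incidence matrix A is lower triangular with
   diagonal -1 (parents have smaller indices), hence invertible with
   A^-1 = -F.  The flow equations say s = A^T S and the voltage equations
   say A (v - v0 1) = 2 Re[Ztilde^* S], phase by phase.  Solving both with
   F and expanding Re[Ztilde^* S] = Re Ztilde Re S + Im Ztilde Im S gives
   v - v0 1 = 2 F (Re Ztilde F^T p + Im Ztilde F^T q), bus by bus. *)

Lemma lcomb_invmx (R : comUnitRingType) (V : lmodType R) n (A : 'M[R]_n)
    (x y : 'I_n -> V) :
  A \in unitmx -> (forall i, \sum_j A i j *: x j = y i) ->
  forall i, x i = \sum_j invmx A i j *: y j.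
Proof.
move=> Aunit Axy i.
under eq_bigr => j _ do rewrite -Axy scaler_sumr.
under eq_bigr => j _ do under eq_bigr => k _ do rewrite scalerA.
rewrite exchange_big /=.
have invAA k : \sum_j invmx A i j * A j k = (1%:M : 'M_n) i k.
  by rewrite -(mulVmx Aunit) mxE.
under eq_bigr => k _ do rewrite -scaler_suml invAA mxE.
rewrite (bigD1 i) //= eqxx scale1r big1 ?addr0 // => k /negbTE ki.
by rewrite eq_sym ki scale0r.
Qed.

Lemma sum_mxtens_index (R : nmodType) m n (F : 'I_(m * n) -> R) :
  \sum_k F k = \sum_(i < m) \sum_(j < n) F (mxtens_index (i, j)).
Proof.
rewrite (reindex (@mxtens_index m n)) /=; last first.
  by exists (@mxtens_unindex m n) => ? _;
    [apply: mxtens_indexK | apply: mxtens_unindexK].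
by rewrite pair_big /=; apply: eq_bigr => -[i j].
Qed.

Section Stacking.
Variables (R : rcfType) (N : nat).
Implicit Types (x f g : 'I_N -> 'cV[R]_3).

Lemma stack_mxtens_index x n k j : stack x (mxtens_index (n, k)) j = x n k 0.
Proof. by rewrite mxE mxtens_indexK. Qed.

Lemma eq_stack f g : (forall n, f n = g n) -> stack f = stack g.
Proof. by move=> fg; apply/matrixP => r j; rewrite !mxE fg. Qed.

Lemma stackD f g : stack (fun n => f n + g n) = stack f + stack g.
Proof. by apply/matrixP => r j; rewrite !mxE. Qed.

Lemma stackZ (a : R) f : stack (fun n => a *: f n) = a *: stack f.
Proof. by apply/matrixP => r j; rewrite !mxE. Qed.

Lemma stack_const (a : R) :
  stack (fun _ : 'I_N => a *: const_mx 1) = a *: const_mx 1.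
Proof. by apply/matrixP => r j; rewrite !mxE. Qed.

Lemma mul_tens1mx_stack (A : 'M[R]_N) x :
  (A *t (1%:M : 'M[R]_3)) *m stack x = stack (fun n => \sum_m A n m *: x m).
Proof.
apply/matrixP => r j; case: (mxtens_indexP r) => n k.
rewrite stack_mxtens_index summxE mxE sum_mxtens_index; apply: eq_bigr => m _.
rewrite (bigD1 k) //= big1 => [|l /negbTE lk].
  by rewrite tensmxE stack_mxtens_index !mxE eqxx mulr1 addr0.
by rewrite tensmxE !mxE eq_sym lk mulr0 mul0r.
Qed.

Lemma mul_bdiag_stack (B : 'I_N -> 'M[R]_3) x :
  bdiag B *m stack x = stack (fun n => B n *m x n).
Proof.
have bdiagE n m k l : bdiag B (mxtens_index (n, k)) (mxtens_index (m, l))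
    = (n == m)%:R * B n k l.
  rewrite /bdiag summxE (bigD1 n) //= big1 => [|i /negbTE ni].
    by rewrite tensmxE !mxE eqxx addr0 eq_sym.
  by rewrite tensmxE !mxE [n == i]eq_sym ni mul0r.
apply/matrixP => r j; case: (mxtens_indexP r) => n k.
rewrite stack_mxtens_index mxE sum_mxtens_index (bigD1 n) //=.
rewrite [X in _ + X]big1 ?addr0 => [|m nm].
  rewrite mxE; apply: eq_bigr => l _.
  by rewrite bdiagE eqxx mul1r stack_mxtens_index.
by apply: big1 => l _; rewrite bdiagE eq_sym (negbTE nm) mul0r mul0r.
Qed.

End Stacking.

Section Permutation.
Variables (R : rcfType) (N : nat).

Lemma Tmx_entry (r : 'I_(N * 3)) (c : 'I_(3 * N)) :
  Tmx R N r c
  = (c == mxtens_index ((mxtens_unindex r).2, (mxtens_unindex r).1))%:R.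
Proof.
case: (mxtens_indexP r) => n k; case: (mxtens_indexP c) => ph m.
rewrite /Tmx mxE !mxtens_indexK /= /Tblock tensmxE !mxE.
rewrite (inj_eq (can_inj (@mxtens_indexK _ _))) xpair_eqE [k == ph]eq_sym eqxx /=.
by case: (ph == k); case: (m == n); rewrite ?mulr1n ?mul1r ?mulr0n ?mul0r.
Qed.

Lemma mulTmx p (Y : 'M[R]_(3 * N, p)) r j :
  (Tmx R N *m Y) r j
  = Y (mxtens_index ((mxtens_unindex r).2, (mxtens_unindex r).1)) j.
Proof.
rewrite mxE (bigD1 (mxtens_index ((mxtens_unindex r).2, (mxtens_unindex r).1))) //=.
rewrite Tmx_entry eqxx mul1r big1 ?addr0 // => c /negbTE cr.
by rewrite Tmx_entry cr mul0r.
Qed.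

Lemma mulmx_trTmx p (Y : 'M[R]_(p, 3 * N)) i r :
  (Y *m (Tmx R N)^T) i r
  = Y i (mxtens_index ((mxtens_unindex r).2, (mxtens_unindex r).1)).
Proof.
rewrite mxE (bigD1 (mxtens_index ((mxtens_unindex r).2, (mxtens_unindex r).1))) //=.
rewrite mxE Tmx_entry eqxx mulr1 big1 ?addr0 // => c /negbTE cr.
by rewrite mxE Tmx_entry cr mulr0.
Qed.

Lemma MmxE (par : 'I_N -> 'I_N.+1) : Mmx R par = Fmx R par *t (1%:M : 'M[R]_3).
Proof.
apply/matrixP => r c; rewrite /Mmx mulmx_trTmx mulTmx.
case: (mxtens_indexP r) => n k; case: (mxtens_indexP c) => n' k'.
by rewrite !mxtens_indexK /= !tensmxE mulrC.
Qed.

End Permutation.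

Section Incidence.
Variables (R : rcfType) (N : nat) (par : 'I_N -> 'I_N.+1).
Hypothesis par_le : forall n : 'I_N, (par n <= n)%N.

Lemma incid_redE n m :
  incid_red R par n m = (lift ord0 m == par n)%:R - (m == n)%:R.
Proof. by rewrite /incid_red !mxE (inj_eq (@lift_inj _ ord0)). Qed.

Lemma incid_red_tr_lcomb (V : lmodType R) (y : 'I_N -> V) n :
  \sum_m incid_red R par m n *: y m
  = \sum_(m | par m == lift ord0 n) y m - y n.
Proof.
under eq_bigr => m _ do rewrite incid_redE scalerBl.
rewrite sumrB [X in _ - X](bigD1 n) //= eqxx scale1r.
rewrite [X in _ - (_ + X)]big1 ?addr0 => [|m /negbTE mn]; last first.
  by rewrite eq_sym mn scale0r.
congr (_ - _); rewrite [RHS]big_mkcond; apply: eq_bigr => m _.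
by rewrite eq_sym; case: eqP; rewrite ?scale1r ?scale0r.
Qed.

Lemma incid_red_busv v0 (v : 'I_N -> 'cV[R]_3) n :
  \sum_m incid_red R par n m *: (v m - v0 *: const_mx 1)
  = busv v0 v (par n) - v n.
Proof.
under eq_bigr => m _ do rewrite incid_redE scalerBl.
rewrite sumrB [X in _ - X](bigD1 n) //= eqxx scale1r.
rewrite [X in _ - (_ + X)]big1 ?addr0; last by move=> m /negbTE ->; rewrite scale0r.
rewrite /busv; case: unliftP => [j ->|->].
  rewrite (bigD1 j) //= eqxx scale1r big1 ?addr0 => [|m /negbTE mj]; last first.
    by rewrite (inj_eq (@lift_inj _ ord0)) mj scale0r.
  by rewrite opprB addrA subrK.
rewrite big1 ?sub0r ?opprB ?subrK // => m _.
by rewrite eq_sym (negbTE (neq_lift _ _)) scale0r.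
Qed.

Lemma lift_neq_par (i j : 'I_N) : (i <= j)%N -> (lift ord0 j == par i) = false.
Proof.
move=> ij; apply/negbTE/eqP => jpi.
by have := par_le i; rewrite -jpi /= /bump /=; lia.
Qed.

Lemma incid_red_unit : incid_red R par \in unitmx.
Proof.
have trig : is_trig_mx (incid_red R par).
  apply/is_trig_mxP => i j ij.
  have /negbTE ji : j != i by rewrite neq_ltn ij orbT.
  by rewrite incid_redE lift_neq_par ?(ltnW ij) // ji subrr.
rewrite unitmxE unitfE (det_trig trig) prodf_seq_neq0; apply/allP => i _ /=.
by rewrite incid_redE lift_neq_par // eqxx sub0r oppr_eq0 oner_eq0.
Qed.

Lemma invmx_incid_red : invmx (incid_red R par) = - Fmx R par.
Proof. by rewrite /Fmx opprK. Qed.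

Lemma busv_Fmx v0 (v : 'I_N -> 'cV[R]_3) n :
  v n - v0 *: const_mx 1 = - \sum_m Fmx R par n m *: (busv v0 v (par m) - v m).
Proof.
rewrite (lcomb_invmx incid_red_unit (incid_red_busv v0 v)) -sumrN.
by apply: eq_bigr => m _; rewrite invmx_incid_red mxE scaleNr.
Qed.

Lemma flow_Fmx (f : {additive R[i] -> R}) (S s : 'I_N -> 'cV[R[i]]_3) :
  (forall n, s n = \sum_(k | par k == lift ord0 n) S k - S n) ->
  forall m, map_mx f (S m) = - \sum_n (Fmx R par)^T m n *: map_mx f (s n).
Proof.
move=> flow m; have At_unit : (incid_red R par)^T \in unitmx.
  by rewrite unitmx_tr incid_red_unit.
rewrite (@lcomb_invmx _ _ _ _ (fun k => map_mx f (S k)) (fun n => map_mx f (s n))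
  At_unit) => [|n]; last first.
  under eq_bigr => k _ do rewrite mxE.
  by rewrite incid_red_tr_lcomb flow map_mxB map_mx_sum.
rewrite -sumrN; apply: eq_bigr => n _.
by rewrite -trmx_inv invmx_incid_red !mxE scaleNr.
Qed.

End Incidence.

Section ComplexParts.
Variable R : rcfType.

Lemma Re_mx_rect m n (a b : 'M[R]_(m, n)) :
  Re_mx (cplx_of a + jC R *: cplx_of b) = a.
Proof. by apply/matrixP => i j; rewrite !mxE /=; ring. Qed.

Lemma Im_mx_rect m n (a b : 'M[R]_(m, n)) :
  Im_mx (cplx_of a + jC R *: cplx_of b) = b.
Proof. by apply/matrixP => i j; rewrite !mxE /=; ring. Qed.

Lemma Re_mx_conj_mul m n p (A : 'M[R[i]]_(m, n)) (x : 'M[R[i]]_(n, p)) :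
  Re_mx (cconj_mx A *m x) = Re_mx A *m Re_mx x + Im_mx A *m Im_mx x.
Proof.
apply/matrixP => k j; rewrite !mxE raddf_sum -big_split /=; apply: eq_bigr => l _.
by rewrite !mxE; case: (A k l) => a b; case: (x l j) => c d /=; ring.
Qed.

End ComplexParts.

Theorem proposition2 (R : rcfType) (N : nat) (par : 'I_N -> 'I_N.+1)
  (Hpar : forall n : 'I_N, (par n <= n)%N)
  (Z : 'I_N -> 'M[R[i]]_3) (HZ : forall n, (Z n)^T = Z n)
  (p q v : 'I_N -> 'cV[R]_3) (v0 : R) (S : 'I_N -> 'cV[R[i]]_3)
  (Hflow : forall n : 'I_N,
     cplx_of (p n) + jC R *: cplx_of (q n)
     = \sum_(k < N | par k == lift ord0 n) S k - S n)
  (Hvolt : forall n : 'I_N,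
     busv v0 v (par n) - v n
     = 2%:R *: Re_mx (cconj_mx (Ztilde (Z n)) *m S n)) :
  stack v = Rmx par Z *m stack p + Xmx par Z *m stack q
            + v0 *: (const_mx 1 : 'cV[R]_(N * 3)).
Proof.
set F := Fmx R par.
have ReS m : Re_mx (S m) = - \sum_n F^T m n *: p n.
  rewrite /Re_mx (flow_Fmx Hpar (complex.Re (R:=R)) Hflow).
  by under eq_bigr => n _ do rewrite [map_mx _ _](Re_mx_rect (p n) (q n)).
have ImS m : Im_mx (S m) = - \sum_n F^T m n *: q n.
  rewrite /Im_mx (flow_Fmx Hpar (complex.Im (R:=R)) Hflow).
  by under eq_bigr => n _ do rewrite [map_mx _ _](Im_mx_rect (p n) (q n)).
have vE n : v n = 2%:R *: \sum_m F n m *: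
      (Re_mx (Ztilde (Z m)) *m \sum_l F^T m l *: p l
       + Im_mx (Ztilde (Z m)) *m \sum_l F^T m l *: q l)
    + v0 *: const_mx 1.
  apply/eqP; rewrite -subr_eq; apply/eqP; rewrite (busv_Fmx Hpar) scaler_sumr -sumrN.
  apply: eq_bigr => m _; rewrite Hvolt Re_mx_conj_mul ReS ImS.
  by rewrite !mulmxN -opprD !scalerN opprK !scalerA mulrC.
rewrite /Rmx /Xmx !MmxE -!scalemxAl -!mulmxA trmx_tens tr_scalar_mx.
rewrite !(mul_tens1mx_stack, mul_bdiag_stack) -!stackZ -stack_const -!stackD.
apply: eq_stack => n; rewrite vE.
by under eq_bigr do rewrite scalerDr; rewrite big_split scalerDr.
Qed.
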